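(* There is a universal constant $c$ such that for every $0<\gamma<1$, every $f:\{0,1\}^n\to\{0,1\}$ and all sets $J,K\subseteq[n]$ with $|J|,|K|\ge(1-\gamma)n$, $$\mathrm{SymInf}_f(J\cup K)\le\mathrm{SymInf}_f(J)+\mathrm{SymInf}_f(K)+c\sqrt{\gamma}.$$
   Context: $\mathcal{S}_J$ is the set of permutations of $[n]$ fixing every element outside $J$; $\pi x$ is the vector whose $\pi(i)$-th coordinate is $x_i$. $\mathrm{SymInf}_f(J)=\Pr_{x,\pi}[f(x)\ne f(\pi x)]$ with $x$ uniform in $\{0,1\}^n$ and $\pi$ uniform in $\mathcal{S}_J$. *)

From HB Require Import structures.
From mathcomp Require Import all_boot all_order all_algebra all_fingroup.
From mathcomp Require Import Rstruct.
From Stdlib Require Import Rdefinitions.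
Set Implicit Arguments. Unset Strict Implicit. Unset Printing Implicit Defensive.
Import Order.TTheory GRing.Theory Num.Theory.
Local Open Scope ring_scope.

(* pi x : the vector whose pi(i)-th coordinate is x_i, i.e. (pi x)_j = x_{pi^-1 j} *)
Definition permx (n : nat) (s : {perm 'I_n}) (x : {ffun 'I_n -> bool})
  : {ffun 'I_n -> bool} := [ffun j => x (s^-1%g j)].

Definition SymGroup (n : nat) (J : {set 'I_n}) : {set {perm 'I_n}} :=
  [set s : {perm 'I_n} | perm_on J s].

Definition SymInf (n : nat) (f : {ffun 'I_n -> bool} -> bool) (J : {set 'I_n}) : R :=
  (#|[set p : {ffun 'I_n -> bool} * {perm 'I_n} |
       (p.2 \in SymGroup J) && (f p.1 != f (permx p.2 p.1))]|%:R)
  / ((#|{ffun 'I_n -> bool}| * #|SymGroup J|)%N%:R).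

(* Put L = J :|: K and E = L :\: K, so that #|E| <= gamma n.  Replacing the mismatch
   [f x != f (pi x)] by its average over a further uniform t in S_K does not change
   SymInf_f(L) since S_K <= S_L, and for pi in S_J the triangle inequality bounds the
   smoothed quantity by SymInf_f(J) + SymInf_f(K).  For fixed x, the smoothed mismatch
   with pi x only depends on the bits of pi x in E, because pi x ranges over the S_L-orbit
   of x.  Averaging a function of those bits over S (= L or J) makes it a function of
   their Hamming weight which is 2/sqrt #|S :\: E|-Lipschitz, and the weight deviates
   from its mean by sqrt #|E| / 2 on average; hence for both S = L and S = J the S-average
   is within 4 sqrt gamma of the same reference value, the average over independent
   uniform points. *)

From HB Require Import structures.
From mathcomp Require Import all_boot all_order all_algebra all_fingroup.
From mathcomp Require Import Rstruct ring lra.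
Local Notation R := Rdefinitions.R.
Set Implicit Arguments. Unset Strict Implicit. Unset Printing Implicit Defensive.
Import Order.TTheory GRing.Theory Num.Theory.
Local Open Scope ring_scope.

Local Notation cube n := {ffun 'I_n -> bool}.

Section CubeAction.

Variable n : nat.
Implicit Types (x y z : cube n) (s t : {perm 'I_n}) (A B : {set 'I_n}).

Lemma permxE s x i : permx s x i = x (s^-1%g i).
Proof. by rewrite ffunE. Qed.

Lemma permxM s t x : permx t (permx s x) = permx (s * t)%g x.
Proof. by apply/ffunP => i; rewrite !permxE invMg permM. Qed.

Lemma permx1 x : permx 1%g x = x.
Proof. by apply/ffunP => i; rewrite permxE invg1 perm1. Qed.

Lemma permxK s : cancel (permx s) (permx s^-1%g).
Proof. by move=> x; rewrite permxM mulgV permx1. Qed.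

Lemma permxKV s : cancel (permx s^-1%g) (permx s).
Proof. by move=> x; rewrite permxM mulVg permx1. Qed.

Lemma permx_out A s x i : perm_on A s -> i \notin A -> permx s x i = x i.
Proof. by move=> sA iA; rewrite permxE (out_perm (perm_onV sA) iA). Qed.

Definition weight A x := #|[set i in A | x i]|.

Lemma eq_weight A x y : (forall i, i \in A -> x i = y i) -> weight A x = weight A y.
Proof.
by move=> xy; apply: eq_card => i; rewrite !inE; case: (boolP (i \in A)) => // /xy ->.
Qed.

Lemma weight_le_card A x : (weight A x <= #|A|)%nat.
Proof. by apply/subset_leq_card/subsetP => i; rewrite inE => /andP[]. Qed.

Lemma natr_weight A x : (weight A x)%:R = \sum_(i in A) ((x i)%:R : R).
Proof.
rewrite /weight -sum1_card natr_sum big_mkcond [RHS]big_mkcond /=.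
by apply: eq_bigr => i _; rewrite inE; case: (i \in A); case: (x i).
Qed.

Lemma weight_permx A s x : perm_on A s -> weight A (permx s x) = weight A x.
Proof.
move=> sA; rewrite /weight -[in RHS](card_imset _ (@perm_inj _ s)).
apply: eq_card => i; rewrite !inE permxE; apply/andP/imsetP => [[iA xi]|[j]].
  exists (s^-1%g i); last by rewrite permKV.
  by rewrite inE xi (perm_closed _ (perm_onV sA)) iA.
by rewrite inE => /andP[jA xj] ->; rewrite permK xj (perm_closed _ sA).
Qed.

Lemma weight_setD A B x : B \subset A -> weight A x = (weight (A :\: B) x + weight B x)%nat.
Proof.
move=> BA; rewrite /weight -(cardsID B [set i in A | x i]) addnC; congr (_ + _)%nat.
  by apply: eq_card => i; rewrite !inE; case: (i \in B); case: (i \in A).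
apply: eq_card => i; rewrite !inE.
by case: (boolP (i \in B)) => iB; rewrite ?andbT ?andbF //= (subsetP BA _ iB).
Qed.

Definition flip (p : 'I_n) x : cube n := [ffun i => if i == p then ~~ x p else x i].

Lemma flipK p : involutive (flip p).
Proof.
move=> x; apply/ffunP => i; rewrite !ffunE.
by case: (eqVneq i p) => [->|]; rewrite ?eqxx ?negbK.
Qed.

Lemma weight_flip A x j : j \in A -> x j -> weight A x = (weight A (flip j x)).+1.
Proof.
move=> jA xj; rewrite /weight (cardsD1 j) inE jA xj /= add1n; congr _.+1.
apply: eq_card => i; rewrite !inE !ffunE.
by case: (eqVneq i j) => [->|] /=; rewrite ?xj ?andbF // andbT.
Qed.

Lemma weight_eq_on A x y : weight A x = weight A y ->
  (forall i, i \in A -> x i -> y i) -> forall i, i \in A -> x i = y i.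
Proof.
move=> wxy xy i iA.
have sub : [set i in A | x i] \subset [set i in A | y i].
  by apply/subsetP => j; rewrite !inE => /andP[jA /(xy _ jA) ->]; rewrite jA.
have /setP/(_ i) : [set i in A | x i] = [set i in A | y i].
  by apply/eqP; rewrite eqEcard sub -/(weight A y) -wxy /=.
by rewrite !inE iA.
Qed.

(* Induction on the number of ones of x in A missing from y: swapping one of them with a
   one of y missing from x removes it. *)
Lemma permx_transitive A x y : (forall i, i \notin A -> x i = y i) ->
  weight A x = weight A y -> exists2 s, perm_on A s & y = permx s x.
Proof.
move card_mis : #|[set i in A | x i && ~~ y i]| => k.
elim: k x card_mis => [|k IH] x card_mis xy_out wxy.
  exists 1%g; first exact: perm_on1.
  rewrite permx1; apply/ffunP => i; case: (boolP (i \in A)) => iA; last by rewrite xy_out.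
  symmetry; apply: (weight_eq_on wxy) iA => j jA xj; apply/negPn/negP => nyj.
  by move/eqP: card_mis; rewrite cards_eq0 => /eqP/setP/(_ j); rewrite !inE jA xj nyj.
have [a] : exists a, a \in [set i in A | x i && ~~ y i] by apply/set0Pn; rewrite -card_gt0 card_mis.
rewrite inE => /and3P[aA xa nya].
have [b /and3P[bA nxb yb]] : exists b, [&& b \in A, ~~ x b & y b].
  apply/existsP/contraT => /existsPn nob.
  suff : y a = x a by rewrite xa (negbTE nya).
  apply: (weight_eq_on (esym wxy)) aA => j jA yj.
  by have := nob j; rewrite jA yj andbT negbK.
have tA : perm_on A (tperm a b).
  by apply: subset_trans (tperm_on a b) _; apply/subsetP => i; rewrite !inE => /orP[] /eqP ->.
have [|||s sA ->] := IH (permx (tperm a b) x).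
- rewrite (cardsD1 a) inE aA xa nya /= add1n in card_mis; case: card_mis => <-.
  apply: eq_card => i; rewrite !inE permxE tpermV.
  by case: tpermP => [->|->|/eqP ia /eqP ib]; rewrite ?eqxx ?(negbTE nxb) ?yb ?andbF ?ia.
- by move=> i iA; rewrite (permx_out _ tA iA) xy_out.
- by rewrite weight_permx.
by exists (tperm a b * s)%g; rewrite ?permxM //; apply: perm_onM.
Qed.

End CubeAction.

Section Average.

Variable T : finType.
Implicit Types (A : {set T}) (F G : T -> R).

Definition avg A F : R := (\sum_(t in A) F t) / #|A|%:R.

Lemma eq_avg A F G : {in A, F =1 G} -> avg A F = avg A G.
Proof. by move=> FG; rewrite /avg (eq_bigr _ FG). Qed.

Lemma avg_le A F G : {in A, forall t, F t <= G t} -> avg A F <= avg A G.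
Proof. by move=> FG; rewrite /avg ler_wpM2r ?invr_ge0 ?ler0n // ler_sum. Qed.

Lemma avg_const A c : (0 < #|A|)%nat -> avg A (fun=> c) = c.
Proof. by move=> A0; rewrite /avg sumr_const -[c *+ _]mulr_natr mulfK // pnatr_eq0 -lt0n. Qed.

Lemma avg01 A F : (0 < #|A|)%nat -> (forall t, 0 <= F t <= 1) -> 0 <= avg A F <= 1.
Proof.
move=> A0 F01; apply/andP; split; [rewrite -(avg_const 0 A0) | rewrite -(avg_const 1 A0)].
  by apply: avg_le => t _; case/andP: (F01 t).
by apply: avg_le => t _; case/andP: (F01 t).
Qed.

Lemma avgD A F G : avg A (fun t => F t + G t) = avg A F + avg A G.
Proof. by rewrite /avg big_split mulrDl. Qed.

Lemma avgB A F G : avg A (fun t => F t - G t) = avg A F - avg A G.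
Proof. by rewrite /avg sumrB mulrBl. Qed.

Lemma avgZ A c F : avg A (fun t => c * F t) = c * avg A F.
Proof. by rewrite /avg -mulr_sumr mulrA. Qed.

Lemma avgMr A F c : avg A (fun t => F t * c) = avg A F * c.
Proof. by rewrite /avg -mulr_suml mulrAC. Qed.

Lemma avg_norm A F : `|avg A F| <= avg A (fun t => `|F t|).
Proof.
by rewrite /avg normrM normfV normr_nat ler_wpM2r ?invr_ge0 ?ler0n ?ler_norm_sum.
Qed.

Lemma avg_sum (I : finType) (V : {set I}) A (G : I -> T -> R) :
  avg A (fun t => \sum_(i in V) G i t) = \sum_(i in V) avg A (G i).
Proof. by rewrite /avg exchange_big /= mulr_suml. Qed.

Lemma avg_reindex A (h : T -> T) F : injective h -> (forall t, (h t \in A) = (t \in A)) ->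
  avg A (fun t => F (h t)) = avg A F.
Proof.
move=> hinj hA; rewrite /avg [in RHS](reindex_inj hinj) /=.
by congr (_ / _); apply: eq_bigl => t; rewrite hA.
Qed.

Lemma avgT_inj (h : T -> T) F : injective h -> avg setT (fun t => F (h t)) = avg setT F.
Proof. by move=> hinj; apply: avg_reindex => // t; rewrite !in_setT. Qed.

End Average.

Lemma avg_swap (T U : finType) (A : {set T}) (B : {set U}) (F : T -> U -> R) :
  avg A (fun t => avg B (F t)) = avg B (fun u => avg A (fun t => F t u)).
Proof.
rewrite /avg -mulr_suml exchange_big /= -mulr_suml.
by rewrite -!mulrA [X in _ * X]mulrC.
Qed.

Section GroupAverage.

Variables (gT : finGroupType) (G : {group gT}) (F : gT -> R).

Lemma avg_mulgl a : a \in G -> avg G (fun s => F (a * s)%g) = avg G F.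
Proof. by move=> aG; apply: avg_reindex => [|s]; [exact: mulgI | rewrite groupMl]. Qed.

Lemma avg_mulgr a : a \in G -> avg G (fun s => F (s * a)%g) = avg G F.
Proof. by move=> aG; apply: avg_reindex => [|s]; [exact: mulIg | rewrite groupMr]. Qed.

Lemma avg_invg : avg G (fun s => F s^-1%g) = avg G F.
Proof. by apply: avg_reindex => [|s]; [exact: invg_inj | rewrite groupV]. Qed.

End GroupAverage.

Lemma card_cube_gt0 n : (0 < #|[set: cube n]|)%nat.
Proof. by apply/card_gt0P; exists [ffun=> false]; rewrite in_setT. Qed.

Lemma SymGroupE n (S : {set 'I_n}) : SymGroup S = Sym S.
Proof. by []. Qed.

Section Merge.

Variable n : nat.
Implicit Types (E : {set 'I_n}) (y r : cube n) (F : cube n -> R).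

Definition merge E y r : cube n := [ffun i => if i \in E then y i else r i].

Lemma avg_merge2 E (H : cube n -> cube n -> R) :
  avg setT (fun y => avg setT (fun r => H (merge E y r) (merge E r y)))
  = avg setT (fun u => avg setT (H u)).
Proof.
rewrite /avg -!mulr_suml !pair_big /=; congr (_ * _ * _).
pose h (p : cube n * cube n) := (merge E p.1 p.2, merge E p.2 p.1).
have hK : involutive h.
  by move=> [y r]; congr (_, _); apply/ffunP => i; rewrite !ffunE; case: (i \in E).
by rewrite [RHS](reindex_inj (inv_inj hK)) /=; apply: eq_bigl => p; rewrite !in_setT.
Qed.

Definition cond_avg E F y := avg setT (fun r => F (merge E y r)).

Lemma avg_cond_avg E F : avg setT (cond_avg E F) = avg setT F.
Proof.
have := avg_merge2 E (fun u _ => F u); rewrite /cond_avg => ->.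
by apply: eq_avg => u _; rewrite avg_const ?card_cube_gt0.
Qed.

Lemma avg_diag_cond_avg E (Fam : cube n -> cube n -> R) :
  (forall y y' z, (forall i, i \in E -> y i = y' i) -> Fam y z = Fam y' z) ->
  avg setT (fun y => Fam y y) = avg setT (fun y => cond_avg E (Fam y) y).
Proof.
move=> FamE; transitivity (avg setT (fun u => avg setT (fun _ : cube n => Fam u u))).
  by apply: eq_avg => u _; rewrite avg_const ?card_cube_gt0.
rewrite -(avg_merge2 E (fun u _ => Fam u u)); apply: eq_avg => y _; apply: eq_avg => r _.
by apply: FamE => i iE; rewrite ffunE iE.
Qed.

End Merge.

Section WeightDeviation.

Variable n : nat.
Implicit Types (V : {set 'I_n}) (r : cube n).

Definition centered_bit r (p : 'I_n) : R := (r p)%:R - 1 / 2.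

Lemma avg_centered_bitM (p q : 'I_n) :
  avg setT (fun r => centered_bit r p * centered_bit r q) = (p == q)%:R / 4.
Proof.
rewrite /centered_bit; have [<-|qp] := eqVneq.
  rewrite -[RHS](avg_const _ (card_cube_gt0 n)); apply: eq_avg => r _.
  by case: (r p) => /=; field.
set G := fun r : cube n => _.
(* Flipping the bit p negates the summand. *)
have : avg setT G = - avg setT G.
  rewrite -{1}(avgT_inj G (inv_inj (flipK p))) -mulN1r -avgZ.
  apply: eq_avg => r _; rewrite /G !ffunE eqxx [q == p]eq_sym (negbTE qp).
  by case: (r p) => /=; field.
by rewrite mul0r; lra.
Qed.

Lemma avg_weight_sqr_dev V :
  avg setT (fun r => ((weight V r)%:R - #|V|%:R / 2) ^+ 2 : R) = #|V|%:R / 4.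
Proof.
have devE r : (weight V r)%:R - #|V|%:R / 2 = \sum_(p in V) centered_bit r p.
  by rewrite natr_weight sumrB sumr_const -[1 / 2 *+ _]mulr_natl mul1r.
under eq_avg => r _ do rewrite devE expr2 big_distrlr /=.
rewrite avg_sum (eq_bigr (fun=> 1 / 4)) => [|p pV].
  by rewrite sumr_const -[_ *+ _]mulr_natr mul1r mulrC.
rewrite avg_sum (bigD1 p) //= big1 ?addr0 => [|q /andP[_ qp]].
  by rewrite avg_centered_bitM eqxx mulr1n.
by rewrite avg_centered_bitM eq_sym (negbTE qp) mulr0n mul0r.
Qed.

Lemma normr_le_amgm (t a : R) : 0 < a -> `|t| <= (t ^+ 2 + a ^+ 2) / (2 * a).
Proof.
move=> a0; rewrite ler_pdivlMr ?mulr_gt0 // -real_normK ?num_real //.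
by have := sqr_ge0 (`|t| - a); nra.
Qed.

Lemma avg_weight_abs_dev V :
  avg setT (fun r => `|(weight V r)%:R - #|V|%:R / 2|) <= Num.sqrt (#|V|%:R : R) / 2.
Proof.
have [V0|V0] := posnP #|V|.
  rewrite V0 sqrtr0 mul0r -[X in _ <= X](avg_const 0 (card_cube_gt0 n)).
  apply: avg_le => r _; move: (weight_le_card V r); rewrite V0 leqn0 => /eqP ->.
  by rewrite subrr normr0.
set N : R := #|V|%:R.
have sN0 : 0 < Num.sqrt N by rewrite sqrtr_gt0 ltr0n.
have a0 : 0 < Num.sqrt N / 2 by rewrite divr_gt0.
(* Cauchy--Schwarz, through the pointwise AM-GM bound with the optimal constant. *)
apply: le_trans (avg_le (fun r _ => normr_le_amgm _ a0)) _.
rewrite avgMr avgD avg_weight_sqr_dev avg_const ?card_cube_gt0 // -/N.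
have sN : Num.sqrt N ^+ 2 = N by rewrite sqr_sqrtr ?ler0n.
rewrite le_eqVlt -{1}sN; apply/predU1l; field; exact: lt0r_neq0.
Qed.

Lemma avg_weight_dev_mul V (G : cube n -> R) : (forall r, 0 <= G r <= 1) ->
  `|avg setT (fun r => ((weight V r)%:R - #|V|%:R / 2) * G r)| <= Num.sqrt (#|V|%:R : R) / 2.
Proof.
move=> G01; apply: le_trans (avg_norm _ _) (le_trans _ (avg_weight_abs_dev V)).
apply: avg_le => r _; case/andP: (G01 r) => G0 G1.
by rewrite normrM (ger0_norm G0) ler_piMr.
Qed.

End WeightDeviation.

Lemma permx_tperm_merge n (E : {set 'I_n}) (y r : cube n) j p :
  j \in E -> p \notin E -> y j -> r p ->
  permx (tperm j p) (merge E (flip j y) r) = merge E y (flip p r).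
Proof.
move=> jE pE yj rp; apply/ffunP => i; rewrite permxE tpermV !ffunE.
case: (tpermP j p i) => [->|->|/eqP ij /eqP ip].
- by rewrite (negbTE pE) jE yj rp.
- by rewrite jE (negbTE pE) ?ffunE !eqxx yj rp.
- by case: (i \in E); rewrite ?ffunE ?(negbTE ij) ?(negbTE ip).
Qed.

Section CondAvgLipschitz.

Variables (n : nat) (S E : {set 'I_n}) (F : cube n -> R).
Hypothesis ES : E \subset S.
Hypothesis F01 : forall z, 0 <= F z <= 1.
Hypothesis F_invariant : forall s z, perm_on S s -> F (permx s z) = F z.

Implicit Types (y z r : cube n).

Local Notation V := (S :\: E).

Lemma avg_flip_exchange y j p : j \in E -> y j -> p \in V ->
  avg setT (fun r : cube n => (~~ r p)%:R * F (merge E y r))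
  = avg setT (fun r : cube n => (r p)%:R * F (merge E (flip j y) r)).
Proof.
move=> jE yj; rewrite inE => /andP[pE pS].
rewrite -(avgT_inj _ (inv_inj (flipK p))); apply: eq_avg => r _.
rewrite [in LHS]ffunE eqxx negbK; case: (boolP (r p)) => rp; last by rewrite !mul0r.
rewrite -(permx_tperm_merge jE pE yj rp) F_invariant //.
apply: subset_trans (tperm_on j p) _; apply/subsetP => i.
by rewrite !inE => /orP[] /eqP -> //; apply: (subsetP ES).
Qed.

Lemma avg_weight_flip_exchange y j : j \in E -> y j ->
  avg setT (fun r : cube n => (#|V|%:R - (weight V r)%:R) * F (merge E y r))
  = avg setT (fun r => (weight V r)%:R * F (merge E (flip j y) r)).
Proof.
move=> jE yj.
have zerosE r : #|V|%:R - (weight V r)%:R = \sum_(p in V) ((~~ r p)%:R : R).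
  rewrite natr_weight -sum1_card natr_sum -sumrB; apply: eq_bigr => p _.
  by case: (r p); rewrite /= ?subrr ?subr0.
under eq_avg => r _ do rewrite zerosE mulr_suml.
under [RHS]eq_avg => r _ do rewrite natr_weight mulr_suml.
by rewrite !avg_sum; apply: eq_bigr => p pV; apply: avg_flip_exchange.
Qed.

Lemma cond_avg_flip y j : j \in E -> y j ->
  `|cond_avg E F y - cond_avg E F (flip j y)| * Num.sqrt (#|V|%:R) <= 2.
Proof.
move=> jE yj; set N : R := #|V|%:R.
set a := cond_avg E F y; set b := cond_avg E F (flip j y).
set c := avg setT (fun r => ((weight V r)%:R - N / 2) * F (merge E y r)).
set d := avg setT (fun r => ((weight V r)%:R - N / 2) * F (merge E (flip j y) r)).
have abE : N / 2 * (a - b) = c + d.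
  have := avg_weight_flip_exchange jE yj; rewrite -/N.
  have -> : avg setT (fun r => (N - (weight V r)%:R) * F (merge E y r)) = N / 2 * a - c.
    by rewrite /a /c /cond_avg -avgZ -avgB; apply: eq_avg => r _; field.
  have -> : avg setT (fun r => (weight V r)%:R * F (merge E (flip j y) r)) = N / 2 * b + d.
    by rewrite /b /d /cond_avg -avgZ -avgD; apply: eq_avg => r _; field.
  by move=> h; rewrite mulrBr; lra.
have cd : `|c + d| <= Num.sqrt N.
  apply: le_trans (ler_normD _ _) _.
  by rewrite [leRHS](splitr (Num.sqrt N)) lerD // avg_weight_dev_mul.
rewrite -abE normrM ger0_norm ?divr_ge0 ?ler0n // in cd.
have sN : N = Num.sqrt N ^+ 2 by rewrite sqr_sqrtr ?ler0n.
move: cd (sqrtr_ge0 N) (normr_ge0 (a - b)); rewrite {1}sN; set s := Num.sqrt N; nra.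
Qed.

Lemma cond_avg_weight_eq y y' : weight E y = weight E y' -> cond_avg E F y = cond_avg E F y'.
Proof.
move=> wyy'.
have [s sE Es] : exists2 s, perm_on E s & merge E y' y = permx s (merge E y y).
  apply: permx_transitive => [i iE|]; first by rewrite !ffunE (negbTE iE).
  have wmerge z r : weight E (merge E z r) = weight E z.
    by apply: eq_weight => i iE; rewrite ffunE iE.
  by rewrite !wmerge.
have mergeE r : merge E y' r = permx s (merge E y r).
  apply/ffunP => i; rewrite permxE; case: (boolP (i \in E)) => iE.
    by move/ffunP/(_ i): Es; rewrite permxE !ffunE iE (perm_closed _ (perm_onV sE)) iE.
  by rewrite (out_perm (perm_onV sE) iE) !ffunE (negbTE iE).
apply: eq_avg => r _; rewrite mergeE F_invariant //.
exact: subset_trans ES.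
Qed.

Lemma cond_avg_lipschitz y y' :
  `|cond_avg E F y - cond_avg E F y'| * Num.sqrt (#|V|%:R)
    <= 2 * `|(weight E y)%:R - (weight E y')%:R|.
Proof.
wlog le_yy' : y y' / (weight E y' <= weight E y)%nat.
  move=> H; case: (leqP (weight E y') (weight E y)) => [|/ltnW] /H //.
  by rewrite distrC [`|(_ - (weight E y')%:R)|]distrC.
rewrite -natrB // normr_nat.
move: (weight E y - weight E y')%nat (subnK le_yy') => k.
elim: k y {le_yy'} => [|k IH] y wy.
  by rewrite (cond_avg_weight_eq wy) subrr normr0 !mul0r mulr0.
have [j] : exists j, j \in [set i in E | y i].
  by apply/set0Pn; rewrite -card_gt0 -/(weight E y) -wy.
rewrite inE => /andP[jE yj].
have wflip : (k + weight E y')%nat = weight E (flip j y).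
  by apply/succn_inj; rewrite -(weight_flip jE yj) -wy.
move: (IH _ wflip) (cond_avg_flip jE yj).
set a := cond_avg E F y; set b := cond_avg E F (flip j y); set c := cond_avg E F y'.
have := ler_normD (a - b) (b - c); rewrite addrA subrK.
have := sqrtr_ge0 (#|V|%:R : R); rewrite -natr1; nra.
Qed.

End CondAvgLipschitz.

Lemma avg_permx_swap n (G : {group {perm 'I_n}}) (H : cube n -> cube n -> R) :
  avg setT (fun x => avg G (fun s => H x (permx s x)))
  = avg setT (fun y => avg G (fun s => H (permx s y) y)).
Proof.
rewrite avg_swap [RHS]avg_swap -[RHS]avg_invg; apply: eq_avg => s _.
rewrite -(avgT_inj _ (can_inj (permxKV s))).
by apply: eq_avg => y _; rewrite permxKV.
Qed.

Lemma avg_sym_near_avg n (S E : {set 'I_n}) (Fam : cube n -> cube n -> R) :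
  E \subset S -> (forall y x, 0 <= Fam y x <= 1) ->
  (forall y y' z : cube n, (forall i, i \in E -> y i = y' i) -> Fam y z = Fam y' z) ->
  `|avg setT (fun y => avg (Sym S) (fun s => Fam y (permx s y)))
      - avg setT (fun y => avg setT (Fam y))| * Num.sqrt (#|S :\: E|%:R)
    <= 2 * Num.sqrt (#|E|%:R).
Proof.
move=> ES Fam01 FamE.
pose P y z := avg (Sym S) (fun s => Fam y (permx s z)).
have P01 y z : 0 <= P y z <= 1 by apply: avg01 => // s; apply: Fam01.
have P_invariant y s z : perm_on S s -> P y (permx s z) = P y z.
  move=> sS; rewrite /P -(avg_mulgl (fun u => Fam y (permx u z)) (_ : s \in Sym S)).
    by apply: eq_avg => t _; rewrite permxM.
  by rewrite inE.
have PE (y y' z : cube n) : (forall i, i \in E -> y i = y' i) -> P y z = P y' z.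
  by move=> yy'; apply: eq_avg => s _; apply: FamE.
have avg_P y : avg setT (Fam y) = avg setT (P y).
  rewrite /P avg_swap -[LHS](avg_const _ (cardG_gt0 (Sym_group S))).
  apply: eq_avg => s _; exact: (esym (avgT_inj (Fam y) (can_inj (permxK s)))).
pose w y : R := (weight E y)%:R - #|E|%:R / 2.
(* Both averages go through the S-symmetrisation P y of Fam y: the first becomes
   avg_y cond_avg E (P y) y, the second avg_y avg_y' cond_avg E (P y) y'. *)
rewrite (avg_diag_cond_avg PE) (eq_avg (fun y _ => avg_P y)).
under [X in _ - X]eq_avg => y _ do rewrite -(avg_cond_avg E).
rewrite -avgB; under eq_avg => y _ do rewrite -[X in X - _](avg_const _ (card_cube_gt0 n)) -avgB.
set s := Num.sqrt _; have s0 : 0 <= s := sqrtr_ge0 _.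
apply: le_trans (ler_wpM2r s0 (avg_norm _ _)) _; rewrite -avgMr.
apply: (le_trans (y := avg setT (fun y => avg setT (fun y' => 2 * (`|w y| + `|w y'|))))).
  apply: avg_le => y _; apply: le_trans (ler_wpM2r s0 (avg_norm _ _)) _; rewrite -avgMr.
  apply: avg_le => y' _; apply: le_trans (cond_avg_lipschitz ES (P01 y) (P_invariant y) _ _) _.
  rewrite ler_pM2l // (_ : _ - _ = w y - w y'); first exact: ler_normB.
  by rewrite /w; field.
under eq_avg => y _ do rewrite avgZ avgD (avg_const _ (card_cube_gt0 n)).
rewrite avgZ avgD (avg_const _ (card_cube_gt0 n)).
by have := avg_weight_abs_dev E; rewrite -/(w _); lra.
Qed.

Section SymInfluence.

Variables (n : nat) (f : cube n -> bool).
Implicit Types (x y z : cube n) (J K L S : {set 'I_n}).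

Definition mismatch x y : R := (f x != f y)%:R.

Lemma mismatch01 x y : 0 <= mismatch x y <= 1.
Proof. by rewrite /mismatch; case: (f x != f y); rewrite ?lexx ?ler01. Qed.

Lemma mismatch_triangle x y z : mismatch x z <= mismatch x y + mismatch y z.
Proof. by rewrite /mismatch; case: (f x); case: (f y); case: (f z); rewrite /=; lra. Qed.

Lemma SymInfE S :
  SymInf f S = avg setT (fun x => avg (Sym S) (fun s => mismatch x (permx s x))).
Proof.
rewrite /SymInf RdivE /avg SymGroupE cardsT.
have -> : #|[set p : cube n * {perm 'I_n} | (p.2 \in Sym S) && (f p.1 != f (permx p.2 p.1))]|%:R
    = \sum_(x in setT) \sum_(s in Sym S) mismatch x (permx s x).
  rewrite -sum1_card natr_sum pair_big big_mkcond [RHS]big_mkcond /=.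
  apply: eq_bigr => -[x s] _; rewrite !inE /mismatch /=.
  by case: (perm_on S s); case: (f x != _).
by rewrite natrM invfM -mulr_suml -mulrA [_^-1 * _^-1]mulrC.
Qed.

Lemma SymInf01 S : 0 <= SymInf f S <= 1.
Proof.
rewrite SymInfE; apply: avg01 (card_cube_gt0 n) _ => x.
by apply: avg01 => // s; apply: mismatch01.
Qed.

Definition smooth_mismatch K x y := avg (Sym K) (fun t => mismatch x (permx t y)).

Lemma smooth_mismatch01 K x y : 0 <= smooth_mismatch K x y <= 1.
Proof. by apply: avg01 => // t; apply: mismatch01. Qed.

Lemma smooth_mismatch_permx K x y k :
  perm_on K k -> smooth_mismatch K x (permx k y) = smooth_mismatch K x y.
Proof.
move=> kK; rewrite /smooth_mismatch.
rewrite -(avg_mulgl (fun t => mismatch x (permx t y)) (_ : k \in Sym K)).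
  by apply: eq_avg => t _; rewrite permxM.
by rewrite inE.
Qed.

Lemma SymInf_smooth K L : K \subset L ->
  SymInf f L = avg setT (fun x => avg (Sym L) (fun s => smooth_mismatch K x (permx s x))).
Proof.
move=> KL; rewrite SymInfE; apply: eq_avg => x _; rewrite /smooth_mismatch avg_swap.
rewrite -[LHS](avg_const _ (cardG_gt0 (Sym_group K))); apply: eq_avg => t tK.
have tL : t \in Sym L by move: tK; rewrite !inE => /subset_trans; apply.
rewrite -(avg_mulgr (fun u => mismatch x (permx u x)) tL).
by apply: eq_avg => s _; rewrite permxM.
Qed.

Lemma avg_smooth_mismatch_le J K :
  avg setT (fun x => avg (Sym J) (fun s => smooth_mismatch K x (permx s x)))
  <= SymInf f J + SymInf f K.
Proof.
rewrite !SymInfE /smooth_mismatch.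
apply: le_trans (_ : _ <= avg setT (fun x => avg (Sym J) (fun s => mismatch x (permx s x)
    + avg (Sym K) (fun t => mismatch (permx s x) (permx t (permx s x)))))) _.
  apply: avg_le => x _; apply: avg_le => s _.
  rewrite -[X in _ <= X + _](avg_const _ (cardG_gt0 (Sym_group K))).
  by rewrite -avgD; apply: avg_le => t _; apply: mismatch_triangle.
rewrite (eq_avg (fun x _ => avgD _ _ _)) avgD lerD2l avg_swap.
rewrite -[X in _ <= X](avg_const _ (cardG_gt0 (Sym_group J))); apply/avg_le => s _.
rewrite (avgT_inj (fun z => avg (Sym K) (fun t => mismatch z (permx t z))) (can_inj (permxK s))).
exact: lexx.
Qed.

(* The smoothed mismatch between x and a point of the S_L-orbit of x that agrees with y on
   L :\: K; such points form a single S_K-orbit, so the choice made by [pick] is irrelevant. *)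
Definition orbit_mismatch K L x y : R :=
  if [pick z | [exists s in Sym L, z == permx s x] & [forall i in L :\: K, z i == y i]]
  is Some z then smooth_mismatch K x z else 0.

Lemma orbit_mismatchE K L x y s : K \subset L -> s \in Sym L ->
  (forall i, i \in L :\: K -> permx s x i = y i) ->
  orbit_mismatch K L x y = smooth_mismatch K x (permx s x).
Proof.
move=> KL sL sxy; rewrite /orbit_mismatch; case: pickP => [z|none]; last first.
  have /andP[] := negbT (none (permx s x)); split.
    by apply/existsP; exists s; rewrite sL eqxx.
  by apply/forallP => i; apply/implyP => /sxy ->.
case/andP=> /existsP[t /andP[tL /eqP ->]] /forallP tx_y.
have agreeE i : i \in L :\: K -> permx t x i = permx s x i.
  by move=> iE; rewrite sxy //; apply/eqP; move/implyP: (tx_y i); apply.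
move: sL tL; rewrite !inE => sL tL.
have offK i : i \notin K -> permx t x i = permx s x i.
  move=> iK; case: (boolP (i \in L)) => iL; first by rewrite agreeE // inE iK.
  by rewrite !(permx_out _ _ iL).
have wK : weight K (permx t x) = weight K (permx s x).
  apply/eqP; rewrite -(eqn_add2l (weight (L :\: K) (permx t x))).
  by rewrite {2}(eq_weight agreeE) -!weight_setD // !weight_permx.
have [k kK ->] := permx_transitive offK wK.
by rewrite [RHS]smooth_mismatch_permx.
Qed.

Lemma orbit_mismatch01 K L x y : 0 <= orbit_mismatch K L x y <= 1.
Proof.
by rewrite /orbit_mismatch; case: pickP => [z _|_]; rewrite ?smooth_mismatch01 ?lexx ?ler01.
Qed.

Lemma orbit_mismatch_dep K L x y y' : (forall i, i \in L :\: K -> y i = y' i) ->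
  orbit_mismatch K L x y = orbit_mismatch K L x y'.
Proof.
move=> yy'; rewrite /orbit_mismatch (eq_pick (Q := fun z =>
  [exists s in Sym L, z == permx s x] && [forall i in L :\: K, z i == y' i])) // => z.
by congr (_ && _); apply: eq_forallb => i; case: (boolP (i \in L :\: K)) => // /yy' ->.
Qed.

Lemma avg_smooth_mismatch_orbit K L S : K \subset L -> S \subset L ->
  avg setT (fun x => avg (Sym S) (fun s => smooth_mismatch K x (permx s x)))
  = avg setT (fun y => avg (Sym S) (fun s => orbit_mismatch K L (permx s y) y)).
Proof.
move=> KL SL; rewrite (avg_permx_swap (Sym_group S)); apply: eq_avg => y _; apply: eq_avg => s sS.
have sL : s^-1%g \in Sym L by move: sS; rewrite !inE => /perm_onV/subset_trans; apply.
by rewrite (orbit_mismatchE KL sL) ?permxK.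
Qed.

Lemma smooth_mismatch_near K L S : K \subset L -> L :\: K \subset S -> S \subset L ->
  `|avg setT (fun x => avg (Sym S) (fun s => smooth_mismatch K x (permx s x)))
     - avg setT (fun y => avg setT (fun x => orbit_mismatch K L x y))|
    * Num.sqrt (#|S :\: (L :\: K)|%:R) <= 2 * Num.sqrt (#|L :\: K|%:R).
Proof.
move=> KL ES SL; rewrite (avg_smooth_mismatch_orbit KL SL).
apply: (avg_sym_near_avg (Fam := fun y x => orbit_mismatch K L x y)) => // y.
  by move=> x; apply: orbit_mismatch01.
by move=> y' z; apply: orbit_mismatch_dep.
Qed.

End SymInfluence.

Lemma le_of_scaled_dist (d m e g N : R) : 0 <= d -> 0 < N -> N / 4 <= m -> e <= g * N ->
  0 <= g -> d * Num.sqrt m <= 2 * Num.sqrt e -> d <= 4 * Num.sqrt g.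
Proof.
move=> d0 N0 Nm eN g0 dme.
have sN0 : 0 < Num.sqrt N by rewrite sqrtr_gt0.
have sm : Num.sqrt N / 2 <= Num.sqrt m.
  rewrite -[X in X <= _]ger0_norm ?divr_ge0 ?sqrtr_ge0 // -sqrtr_sqr ler_sqrt; last first.
    exact: le_trans (ltW (divr_gt0 N0 _)) Nm.
  by rewrite expr_div_n sqr_sqrtr ?(ltW N0) // expr2; lra.
have se : Num.sqrt e <= Num.sqrt g * Num.sqrt N.
  by rewrite -sqrtrM // ler_sqrt // mulr_ge0 // ltW.
nra.
Qed.

Lemma SymInf_union_le n (f : cube n -> bool) (J K : {set 'I_n}) (g : R) :
  (0 < n)%nat -> 0 < g -> g < 1 / 4 ->
  (1 - g) * n%:R <= #|J|%:R -> (1 - g) * n%:R <= #|K|%:R ->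
  SymInf f (J :|: K) <= SymInf f J + SymInf f K + 8 * Num.sqrt g.
Proof.
move=> n0 g0 g14 hJ hK; set L := J :|: K; set E := L :\: K.
have KL : K \subset L := subsetUr J K.
have EJ : E \subset J.
  by apply/subsetP => i; rewrite !inE => /andP[/negbTE iK]; rewrite iK orbF.
have cardE : #|E|%:R <= g * n%:R.
  have : (#|E| <= #|~: K|)%nat by apply/subset_leq_card/subsetP => i; rewrite !inE => /andP[].
  rewrite -(ler_nat R); move: (cardsC K); rewrite card_ord => /(congr1 (fun k => k%:R : R)).
  rewrite natrD; lra.
have n0R : 0 < n%:R :> R by rewrite ltr0n.
have cardJE : n%:R / 4 <= #|J :\: E|%:R :> R.
  by rewrite cardsD (setIidPr EJ) natrB ?subset_leq_card //; nra.
have cardLE : #|J :\: E|%:R <= #|L :\: E|%:R :> R.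
  by rewrite ler_nat; apply/subset_leq_card/setSD/subsetUl.
have nearL := le_of_scaled_dist (normr_ge0 _) n0R (le_trans cardJE cardLE) cardE (ltW g0)
  (smooth_mismatch_near f KL (subsetDl L K) (subxx L)).
have nearJ := le_of_scaled_dist (normr_ge0 _) n0R cardJE cardE (ltW g0)
  (smooth_mismatch_near f KL EJ (subsetUl J K)).
have := avg_smooth_mismatch_le f J K; rewrite (SymInf_smooth f KL).
move: nearL nearJ; set DL := avg _ _; set Ref := avg _ _; set DJ := avg _ _ => nearL nearJ.
have := ler_norm (DL - Ref); have := ler_norm (Ref - DJ); rewrite distrC; lra.
Qed.

Theorem lemma5 :
  exists c : R, forall (n : nat) (gamma : R)
    (f : {ffun 'I_n -> bool} -> bool) (J K : {set 'I_n}),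
    0 < gamma -> gamma < 1 ->
    (1 - gamma) * n%:R <= #|J|%:R ->
    (1 - gamma) * n%:R <= #|K|%:R ->
    SymInf f (J :|: K) <= SymInf f J + SymInf f K + c * Num.sqrt gamma.
Proof.
exists 8 => n gamma f J K g0 g1 hJ hK.
have /andP[sJ0 sJ1] := SymInf01 f J.
have /andP[sK0 sK1] := SymInf01 f K.
have /andP[sL0 sL1] := SymInf01 f (J :|: K).
have sg0 := sqrtr_ge0 gamma.
have [g14|g14] := ltP gamma (1 / 4).
  have [n0|] := posnP n; last by move=> n0; apply: SymInf_union_le.
  have -> : J :|: K = J by subst n; apply/setP => i; have := ltn_ord i; rewrite ltn0.
  lra.
have : 1 / 2 <= Num.sqrt gamma.
  rewrite -[X in X <= _]ger0_norm ?divr_ge0 // -sqrtr_sqr ler_sqrt; last exact: ltW.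
  by rewrite expr2; lra.
lra.
Qed.
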